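(* Let $A,B\subset\mathbb{R}^n$ be set-germs at $0$ with $0\in\overline{A}\cap\overline{B}$ and let $h:(\mathbb{R}^n,0)\to(\mathbb{R}^n,0)$ be a bi-Lipschitz homeomorphism (germ). If $A$ and $B$ are $ST$-equivalent, then $h(A)$ and $h(B)$ are $ST$-equivalent.
   Context: A bi-Lipschitz homeomorphism germ is a homeomorphism between neighbourhoods of $0$ fixing $0$ with $K_1|x-y|\le|h(x)-h(y)|\le K_2|x-y|$ for some $0<K_1\le K_2$ near $0$. Sea-tangle neighbourhood: $ST_d(A;C)=\{x\in\mathbb{R}^n : \mathrm{dist}(x,A)\le C|x|^d\}$ for $d,C>0$. $A$ and $B$ are $ST$-equivalent if there are $d_1,d_2>1$ and $C_1,C_2>0$ with $B\subset ST_{d_1}(A;C_1)$ and $A\subset ST_{d_2}(B;C_2)$ as germs at $0$ (after intersecting with some neighbourhood of $0$). *)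

From HB Require Import structures.
From mathcomp Require Import all_boot all_order all_algebra.
From mathcomp Require Import all_classical all_reals all_analysis.
Set Implicit Arguments. Unset Strict Implicit. Unset Printing Implicit Defensive.
Import Order.TTheory GRing.Theory Num.Theory.
Import numFieldNormedType.Exports.
Local Open Scope classical_set_scope.
Local Open Scope ring_scope.

Definition enorm {R : realType} {n : nat} (x : 'rV[R]_n) : R :=
  Num.sqrt (\sum_(i < n) x ord0 i ^+ 2).

Definition setdist {R : realType} {n : nat} (x : 'rV[R]_n) (A : set 'rV[R]_n) : R :=
  inf [set enorm (x - a) | a in A].

Definition ST {R : realType} {n : nat} (d C : R) (A : set 'rV[R]_n) : set 'rV[R]_n :=
  [set x | setdist x A <= C * (enorm x `^ d)].

Definition ball0 {R : realType} {n : nat} (r : R) : set 'rV[R]_n :=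
  [set x | enorm x < r].

Definition ST_equiv {R : realType} {n : nat} (A B : set 'rV[R]_n) : Prop :=
  exists d1 d2 C1 C2 r : R,
    1 < d1 /\ 1 < d2 /\ 0 < C1 /\ 0 < C2 /\ 0 < r /\
    (B `&` ball0 r `<=` ST d1 C1 A) /\
    (A `&` ball0 r `<=` ST d2 C2 B).

(* h : (R^n,0) -> (R^n,0) is a bi-Lipschitz homeomorphism germ defined on the
   open neighbourhood U of 0: h 0 = 0, h maps U onto an open neighbourhood of 0,
   and K1|x-y| <= |h x - h y| <= K2|x-y| on U (so h|_U is a homeomorphism
   onto its image). *)
Definition biLipschitz_germ {R : realType} {n : nat}
    (h : 'rV[R]_n -> 'rV[R]_n) (U : set 'rV[R]_n) : Prop :=
  open U /\ U 0 /\ h 0 = 0 /\ open (h @` U) /\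
  exists K1 K2 : R, 0 < K1 /\ K1 <= K2 /\
    (forall x y, U x -> U y ->
       K1 * enorm (x - y) <= enorm (h x - h y) /\
       enorm (h x - h y) <= K2 * enorm (x - y)).

(* A bi-Lipschitz germ h distorts distances at most by K2 and norms at least
   by K1, so for b in B near 0,
     dist(h b, h A) <= K2 dist(b, A) <= K2 C |b|^d <= K2 C K1^-d |h b|^d.
   Hence each ST-inclusion survives with the same exponent and a new constant;
   the only care needed is that the points of A nearly realising dist(b, A) stay in
   the domain U of h, which holds because dist(b, A) <= C |b| is small. *)
From Pilot Require Import Defs.
From HB Require Import structures.
From mathcomp Require Import all_boot all_order all_algebra.
From mathcomp Require Import all_classical all_reals all_analysis.
From mathcomp Require Import lra.
Set Implicit Arguments. Unset Strict Implicit. Unset Printing Implicit Defensive.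
Import Order.TTheory GRing.Theory Num.Theory.
Import numFieldNormedType.Exports.
Local Open Scope classical_set_scope.
Local Open Scope ring_scope.

Section EuclideanDistance.
Variables (R : realType) (n : nat).
Implicit Types (x a b : 'rV[R]_n) (A : set 'rV[R]_n).

Lemma enorm_ge0 x : 0 <= enorm x.
Proof. exact: sqrtr_ge0. Qed.

Lemma norm_le_enorm x : `|x| <= enorm x.
Proof.
rewrite [`|x|]mx_normrE; apply: bigmax_le => [|[i j] _ /=]; first exact: enorm_ge0.
rewrite (ord1 i) /enorm -sqrtr_sqr; apply: ler_wsqrtr.
by rewrite (bigD1 j) //= lerDl; apply: sumr_ge0 => k _; exact: sqr_ge0.
Qed.

Lemma norm_le_enormD b a : `|a| <= enorm b + enorm (b - a).
Proof.
rewrite -{1}(subKr b a); apply: le_trans (ler_normB _ _) _.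
exact: lerD (norm_le_enorm b) (norm_le_enorm (b - a)).
Qed.

Lemma setdist_le x A a : A a -> setdist x A <= enorm (x - a).
Proof.
move=> Aa; apply: ge_inf; last by exists a.
by exists 0 => _ [c _ <-]; exact: enorm_ge0.
Qed.

Lemma setdist_lt x A z : A !=set0 -> setdist x A < z ->
  exists2 a, A a & enorm (x - a) < z.
Proof.
move=> [a Aa] /inf_lt[|_ [c Ac <-] xcz]; last by exists c.
by exists (enorm (x - a)), a.
Qed.

End EuclideanDistance.

Lemma powR_le_self (R : realType) (a d : R) : 0 <= a <= 1 -> 1 <= d -> a `^ d <= a.
Proof.
case/andP; rewrite le_eqVlt => /predU1P[<- _ d_ge1|a_gt0 a_le1 d_ge1].
  by rewrite powR0 // gt_eqF // (lt_le_trans ltr01 d_ge1).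
by apply: ge1r_powR; rewrite ?a_gt0.
Qed.

Section LipschitzImage.
Variables (R : realType) (n : nat) (h : 'rV[R]_n -> 'rV[R]_n) (U : set 'rV[R]_n).
Variable K2 : R.
Hypothesis K2_gt0 : 0 < K2.
Hypothesis h_lipschitz : forall x y, U x -> U y ->
  enorm (h x - h y) <= K2 * enorm (x - y).

Lemma setdist_image_le (A : set 'rV[R]_n) b t : A !=set0 -> U b ->
  (forall a, enorm (b - a) < t -> U a) -> setdist b A < t ->
  setdist (h b) (h @` (A `&` U)) <= K2 * setdist b A.
Proof.
move=> A_n0 Ub Ut bA_lt_t.
have near z : setdist b A < z <= t -> setdist (h b) (h @` (A `&` U)) <= K2 * z.
  case/andP=> bA_lt_z z_le_t; have [a Aa ba_lt_z] := setdist_lt A_n0 bA_lt_z.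
  have Ua : U a by apply: Ut; exact: lt_le_trans z_le_t.
  apply: le_trans (setdist_le _ (ex_intro2 _ _ a (conj Aa Ua) erefl)) _.
  by apply: le_trans (h_lipschitz Ub Ua) _; rewrite ler_pM2l // ltW.
rewrite -ler_pdivrMl //; apply/ler_addgt0Pr => e e_gt0; rewrite ler_pdivrMl //.
have bA_lt_z : setdist b A < setdist b A + e by rewrite ltrDl.
have [z_le_t|t_lt_z] := leP (setdist b A + e) t; first by apply: near; rewrite bA_lt_z.
apply: le_trans (near t _) _; first by rewrite bA_lt_t lexx.
by rewrite ler_pM2l // ltW.
Qed.

End LipschitzImage.

Section BiLipschitzImage.
Variables (R : realType) (n : nat) (h : 'rV[R]_n -> 'rV[R]_n) (U : set 'rV[R]_n).
Variables (K1 K2 rho : R).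
Hypotheses (K1_gt0 : 0 < K1) (K2_gt0 : 0 < K2) (rho_gt0 : 0 < rho).
Hypothesis h0 : h 0 = 0.
Hypothesis U_ball : forall x, `|x| < rho -> U x.
Hypothesis h_biLipschitz : forall x y, U x -> U y ->
  K1 * enorm (x - y) <= enorm (h x - h y) /\
  enorm (h x - h y) <= K2 * enorm (x - y).

Lemma enorm_le_image x : U x -> enorm x <= enorm (h x) / K1.
Proof.
move=> Ux; rewrite ler_pdivlMr // mulrC.
by have [] := h_biLipschitz Ux (U_ball (_ : `|0| < rho)); rewrite ?normr0 // h0 !subr0.
Qed.

(* The bare name [ball0] resolves to a lemma of mathcomp-analysis. *)
Lemma ST_image (A B : set 'rV[R]_n) (d C r : R) :
  A !=set0 -> 1 <= d -> 0 < C -> 0 < r -> B `&` Defs.ball0 r `<=` ST d C A ->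
  exists2 r', 0 < r' &
    h @` (B `&` U) `&` Defs.ball0 r' `<=` ST d (K2 * C * K1^-1 `^ d) (h @` (A `&` U)).
Proof.
move=> A_n0 d_ge1 C_gt0 r_gt0 BA.
pose s := Num.min (Num.min r 1) (rho / (1 + C)).
have s_gt0 : 0 < s by rewrite !lt_min r_gt0 ltr01 divr_gt0 // addr_gt0.
exists (K1 * s); first exact: mulr_gt0.
move=> _ [[b [Bb Ub] <-] hb_small]; rewrite /ST /=.
have b_ge0 := enorm_ge0 b.
have b_le_hb := enorm_le_image Ub.
have b_lt_s : enorm b < s.
  by apply: le_lt_trans b_le_hb _; rewrite ltr_pdivrMr // mulrC.
have [/ltW b_le1 b_lt_r] : enorm b < 1 /\ enorm b < r.
  by move: b_lt_s; rewrite !lt_min => /andP[/andP[]].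
have bA_le_pow : setdist b A <= C * enorm b `^ d by exact: BA.
have bA_le : setdist b A <= C * enorm b.
  by apply: le_trans bA_le_pow _; rewrite ler_pM2l // powR_le_self ?b_ge0.
have b_rho : enorm b * (1 + C) < rho.
  by rewrite -ltr_pdivlMr ?addr_gt0 //; move: b_lt_s; rewrite lt_min => /andP[].
apply: le_trans (setdist_image_le K2_gt0 _ A_n0 Ub (t := rho - enorm b) _ _) _.
- by move=> x y Ux Uy; case: (h_biLipschitz Ux Uy).
- by move=> a ba_lt; apply: U_ball; apply: le_lt_trans (norm_le_enormD b a) _; lra.
- lra.
rewrite -!mulrA ler_pM2l //; apply: le_trans bA_le_pow _.
rewrite ler_pM2l // mulrC -powRM ?invr_ge0 ?enorm_ge0 ?(ltW K1_gt0) //.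
apply: (ge0_ler_powR _ _ _ b_le_hb); rewrite ?nnegrE ?divr_ge0 ?enorm_ge0 ?(ltW K1_gt0) //.
exact: le_trans ler01 d_ge1.
Qed.

End BiLipschitzImage.

Theorem proposition4p5 (R : realType) (n : nat) (A B : set 'rV[R]_n)
    (h : 'rV[R]_n -> 'rV[R]_n) (U : set 'rV[R]_n) :
  closure A 0 -> closure B 0 ->
  biLipschitz_germ h U ->
  ST_equiv A B ->
  ST_equiv (h @` (A `&` U)) (h @` (B `&` U)).
Proof.
move=> clA clB [U_open [U0 [h0 [_ [K1 [K2 [K1_gt0 [K12 h_biLip]]]]]]]].
move=> [d1 [d2 [C1 [C2 [r [d1_gt1 [d2_gt1 [C1_gt0 [C2_gt0 [r_gt0 [BA AB]]]]]]]]]]].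
have K2_gt0 : 0 < K2 by exact: lt_le_trans K12.
have /nbhs_normP[rho rho_gt0 U_ball] : nbhs (0 : 'rV[R]_n) U.
  exact: open_nbhs_nbhs.
have {}U_ball x : `|x| < rho -> U x.
  by move=> x_lt; apply: U_ball; rewrite /ball_ /= sub0r normrN.
have [A_n0 B_n0] : A !=set0 /\ B !=set0.
  by split; [case: (clA _ filterT) => x [] | case: (clB _ filterT) => x []]; exists x.
have [r1 r1_gt0 hBA] := ST_image K1_gt0 K2_gt0 rho_gt0 h0 U_ball h_biLip
  A_n0 (ltW d1_gt1) C1_gt0 r_gt0 BA.
have [r2 r2_gt0 hAB] := ST_image K1_gt0 K2_gt0 rho_gt0 h0 U_ball h_biLip
  B_n0 (ltW d2_gt1) C2_gt0 r_gt0 AB.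
exists d1, d2, (K2 * C1 * K1^-1 `^ d1), (K2 * C2 * K1^-1 `^ d2), (Num.min r1 r2).
have C'_gt0 (C d : R) : 0 < C -> 0 < K2 * C * K1^-1 `^ d.
  by move=> C_gt0; rewrite !mulr_gt0 // powR_gt0 // invr_gt0.
do 2 split=> //; do 2 (split; first exact: C'_gt0).
split; first by rewrite lt_min r1_gt0.
split=> x [hx x_small]; [apply: hBA | apply: hAB]; split => //;
  apply: lt_le_trans x_small _; rewrite ge_min lexx ?orbT //.
Qed.
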